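(* Let $Z=(W,A,X,V,E,S)\sim\mathbb{P}$, where only $(W,A,X)$ is observed. Suppose that for all $j\in\{1,\dots,J\}$: (i) $\mathbb{E}[W_j\mid A,X]=\mathbb{E}[V_jE_jS\mid A,X]$; (ii) $V_j$, $E_j$ and $S$ are mutually independent conditionally on $(A,X)$; (iii) $E_j$ is independent of $(A,X)$; and (iv) $S$ is independent of $(A,X)$. Then for every $j$, the parameter $$\Psi^{(1)}_j(\mathbb{P}):=\log\left(\frac{\mathbb{E}[V_j\mid A=1]}{\mathbb{E}[V_j\mid A=0]}\right)$$ is identifiable.
   Context: $W\in\mathbb{R}_{\ge 0}^J$ are observed category levels, $A\in\{0,1\}$ is a binary exposure, $X\in\mathcal{X}\subseteq\mathbb{R}^p$ are covariates, $V\in\mathbb{R}_{\ge0}^J$ are latent true category levels, $E\in\mathbb{R}_{>0}^J$ are latent category-specific observabilities and $S\in\mathbb{R}_{>0}$ is a latent sample-specific scale; data are i.i.d. draws from $\mathbb{P}$. The parameter is assumed well defined (the conditional means are positive and finite). $\log$ is the natural logarithm. A parameter is identifiable (under a set of assumptions) if its value is uniquely determined by the distribution of the observed variables $(W,A,X)$, i.e. any two distributions satisfying the assumptions and inducing the same distribution of $(W,A,X)$ give the same parameter value. *)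

From HB Require Import structures.
From mathcomp Require Import all_boot all_order all_algebra.
From mathcomp Require Import all_classical all_reals all_analysis.
Set Implicit Arguments. Unset Strict Implicit. Unset Printing Implicit Defensive.
Import Order.TTheory GRing.Theory Num.Theory.
Local Open Scope classical_set_scope.
Local Open Scope ring_scope.

Section Defs.
Context (R : realType) (d : measure_display) (T : measurableType d)
  (P : probability T R) (p : nat).

Definition AX (A : T -> R) (X : T -> p.-tuple R) : T -> (R * p.-tuple R)%type :=
  fun t => (A t, X t).

(* E[Y | A, X] = E[Z | A, X] a.s., for nonnegative Y, Z (extended-real
   conditional expectations), written out through the defining property:
   equal integrals over every event of sigma(A, X). *)
Definition condexp_eq (A : T -> R) (X : T -> p.-tuple R) (Y Z : T -> R) : Prop :=
  forall C : set (R * p.-tuple R)%type, measurable C ->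
    (\int[P]_(t in AX A X @^-1` C) (Y t)%:E = \int[P]_(t in AX A X @^-1` C) (Z t)%:E)%E.

Definition condprob_version (A : T -> R) (X : T -> p.-tuple R) (F : set T)
    (g : (R * p.-tuple R)%type -> R) : Prop :=
  measurable_fun [set: (R * p.-tuple R)%type] g /\
  forall C : set (R * p.-tuple R)%type, measurable C ->
    P (F `&` AX A X @^-1` C) = (\int[P]_(t in AX A X @^-1` C) (g (AX A X t))%:E)%E.

Definition cond_mutual_indep (A : T -> R) (X : T -> p.-tuple R) (U1 U2 U3 : T -> R) : Prop :=
  forall B1 B2 B3 : set R, measurable B1 -> measurable B2 -> measurable B3 ->
    exists g1 g2 g3,
      condprob_version A X (U1 @^-1` B1) g1 /\
      condprob_version A X (U2 @^-1` B2) g2 /\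
      condprob_version A X (U3 @^-1` B3) g3 /\
      condprob_version A X (U1 @^-1` B1 `&` U2 @^-1` B2 `&` U3 @^-1` B3)
        (fun z => g1 z * g2 z * g3 z).

Definition indep_AX (A : T -> R) (X : T -> p.-tuple R) (U : T -> R) : Prop :=
  forall (B : set R) (C : set (R * p.-tuple R)%type), measurable B -> measurable C ->
    P (U @^-1` B `&` AX A X @^-1` C) = (P (U @^-1` B) * P (AX A X @^-1` C))%E.

Definition model_assumptions (J : nat) (W : T -> J.-tuple R) (A : T -> R)
    (X : T -> p.-tuple R) (V E : T -> J.-tuple R) (S : T -> R) : Prop :=
  [/\ measurable_fun [set: T] W, measurable_fun [set: T] A,
      measurable_fun [set: T] X & measurable_fun [set: T] V] /\
  [/\ measurable_fun [set: T] E & measurable_fun [set: T] S] /\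
  (forall t, A t = 0 \/ A t = 1) /\
  (forall t (j : 'I_J), [/\ 0 <= tnth (W t) j, 0 <= tnth (V t) j & 0 < tnth (E t) j]) /\
  (forall t, 0 < S t) /\
  forall j : 'I_J,
    [/\ condexp_eq A X (fun t => tnth (W t) j)
                       (fun t => tnth (V t) j * tnth (E t) j * S t),
        cond_mutual_indep A X (fun t => tnth (V t) j) (fun t => tnth (E t) j) S,
        indep_AX A X (fun t => tnth (E t) j) &
        indep_AX A X S].

Definition cond_mean_ext (A : T -> R) (Y : T -> R) (a : R) : \bar R :=
  (\int[P]_(t in A @^-1` [set a]) (Y t)%:E)%E.

Definition cond_mean (A : T -> R) (Y : T -> R) (a : R) : R :=
  fine (cond_mean_ext A Y a) / fine (P (A @^-1` [set a])).

Definition well_defined (A : T -> R) (Wj Vj : T -> R) : Prop :=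
  forall a : R, a = 0 \/ a = 1 ->
    [/\ (0 < P (A @^-1` [set a]))%E,
        (0 < cond_mean_ext A Vj a < +oo)%E &
        (0 < cond_mean_ext A Wj a < +oo)%E].

Definition Psi1 (A : T -> R) (Vj : T -> R) : R :=
  ln (cond_mean A Vj 1 / cond_mean A Vj 0).

End Defs.

Definition same_observed_law (R : realType) (J p : nat)
    (d1 : measure_display) (T1 : measurableType d1) (P1 : probability T1 R)
    (W1 : T1 -> J.-tuple R) (A1 : T1 -> R) (X1 : T1 -> p.-tuple R)
    (d2 : measure_display) (T2 : measurableType d2) (P2 : probability T2 R)
    (W2 : T2 -> J.-tuple R) (A2 : T2 -> R) (X2 : T2 -> p.-tuple R) : Prop :=
  forall C : set ((J.-tuple R * R) * p.-tuple R)%type, measurable C ->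
    P1 ((fun t => (W1 t, A1 t, X1 t)) @^-1` C) =
    P2 ((fun t => (W2 t, A2 t, X2 t)) @^-1` C).

From HB Require Import structures.
From mathcomp Require Import all_boot all_order all_algebra.
From mathcomp Require Import all_classical all_reals all_analysis.
From mathcomp Require Import measurable_realfun ring.
Set Implicit Arguments. Unset Strict Implicit. Unset Printing Implicit Defensive.
Import Order.TTheory GRing.Theory Num.Theory.
Local Open Scope classical_set_scope.
Local Open Scope ring_scope.

(* Conditioning on A = a is conditioning on (A, X) in {a} x R^p, so assumption
   (i) gives E[W_j; A = a] = E[V_j E_j S; A = a].  By (iii) and (iv) the
   conditional probabilities of events of E_j and of S given (A, X) are a.s.
   constant, so by (ii) the joint law of (V_j, E_j, S) on {A = a} is the law of
   V_j on {A = a} times the unconditional laws of E_j and S.  Integrating out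
   one variable at a time against measures with densities gives
   E[V_j E_j S; A = a] = E[V_j; A = a] c_j with c_j = E[E_j S], which does not
   depend on a and is positive and finite.  Hence the ratio of the conditional
   means of V_j equals that of W_j, a functional of the law of (W, A, X). *)

Section measure_complements.
Local Open Scope ereal_scope.
Context d d' (T : measurableType d) (Y : measurableType d') (R : realType).

Lemma measurable_preimageT (f : T -> Y) (B : set Y) :
  measurable_fun setT f -> measurable B -> measurable (f @^-1` B).
Proof. by move=> mf mB; rewrite -[_ @^-1` _]setTI; exact: mf. Qed.

Lemma measure_fineK (mu : {finite_measure set T -> \bar R}) A :
  measurable A -> (fine (mu A))%:E = mu A.
Proof. by move=> mA; rewrite fineK// fin_num_measure. Qed.

Lemma integral_pushforward_measurable (mu : {measure set T -> \bar R})
  (phi : T -> Y) (g : Y -> \bar R) (C : set Y) :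
  measurable_fun setT phi -> measurable_fun setT g -> measurable C ->
  \int[pushforward mu phi]_(y in C) g y =
  \int[mu]_(x in phi @^-1` C) (g \o phi) x.
Proof.
move=> mphi mg mC.
have pos := ge0_integral_pushforward mphi mu mC
  (measurable_funTS (measurable_funepos mg)) (fun y _ => funepos_ge0 g y).
have neg := ge0_integral_pushforward mphi mu mC
  (measurable_funTS (measurable_funeneg mg)) (fun y _ => funeneg_ge0 g y).
by rewrite [LHS]integralE pos neg [RHS]integralE -funepos_comp -funeneg_comp.
Qed.

Lemma fin_num_integrable (mu : {measure set T -> \bar R}) (D : set T)
  (f : T -> \bar R) :
  measurable D -> measurable_fun D f ->
  \int[mu]_(x in D) f x \is a fin_num -> mu.-integrable D f.
Proof.
move=> mD mf; rewrite integralE fin_numB => /andP[fin_pos fin_neg].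
apply/integrableP; split => //.
rewrite (_ : (fun x => `|f x|) = f^\+ \+ f^\-); last by rewrite -fune_abse.
rewrite ge0_integralD//.
- by rewrite lte_add_pinfty// ltey_eq ?fin_pos ?fin_neg.
- exact: measurable_funepos.
- exact: measurable_funeneg.
Qed.

End measure_complements.

Section mdensity.
Local Open Scope ereal_scope.
Context d (T : measurableType d) (R : realType).

(* [mg] and [g0] do not occur in the body; they make the measure instance
   below canonical. *)
Definition mdensity (mu : {measure set T -> \bar R}) (g : T -> R)
  (mg : measurable_fun setT g) (g0 : forall x, (0 <= g x)%R) :=
  fun A => \int[mu]_(x in A) (g x)%:E.

Section mdensity_measure.
Variables (mu : {measure set T -> \bar R}) (g : T -> R)
  (mg : measurable_fun setT g) (g0 : forall x, (0 <= g x)%R).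

Let mdensity0 : mdensity mu mg g0 set0 = 0.
Proof. by rewrite /mdensity integral_set0. Qed.

Let mdensity_ge0 A : 0 <= mdensity mu mg g0 A.
Proof. by apply: integral_ge0 => x _; rewrite lee_fin. Qed.

Let mdensity_sigma_additive : semi_sigma_additive (mdensity mu mg g0).
Proof.
apply: semi_sigma_additive_nng_induced; first exact/measurable_EFinP.
by move=> x; rewrite lee_fin.
Qed.

HB.instance Definition _ := isMeasure.Build _ _ _ (mdensity mu mg g0)
  mdensity0 mdensity_ge0 mdensity_sigma_additive.

Import HBNNSimple.

Let integral_mdensity_nnsfun (h : {nnsfun T >-> R}) E : measurable E ->
  \int[mdensity mu mg g0]_(x in E) (h x)%:E =
  \int[mu]_(x in E) ((h x)%:E * (g x)%:E).
Proof.
move=> mE; pose hr x r := (r * \1_(h @^-1` [set r]) x)%:E.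
have mgE : measurable_fun E (EFin \o g).
  exact/measurable_funTS/measurable_EFinP.
have mhr r : measurable_fun E (hr^~ r).
  by apply/measurable_EFinP/measurable_funM => //; exact: measurable_indic.
have hE x : (h x)%:E = \sum_(r \in range h) hr x r.
  by rewrite fsumEFin// -fimfunE.
rewrite [LHS](eq_integral (fun x => \sum_(r \in range h) hr x r)); last first.
  by move=> x _; exact: hE.
rewrite [RHS](eq_integral (fun x => \sum_(r \in range h) hr x r * (g x)%:E));
  last by move=> x _; rewrite hE ge0_mule_fsuml// => r; exact: nnfun_muleindic_ge0.
rewrite !ge0_integral_fsum//; last 3 first.
- by move=> r; exact: emeasurable_funM (mhr r) mgE.
- by move=> r x _; rewrite mule_ge0 ?nnfun_muleindic_ge0 ?lee_fin.
- by move=> r x _; exact: nnfun_muleindic_ge0.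
apply: eq_fsbigr => r /[1!inE] -[t _ <-]; rewrite /hr.
rewrite integralZl_indic_nnsfun// integral_indic//.
under [RHS]eq_integral do rewrite EFinM -muleA.
rewrite ge0_integralZl//; last 3 first.
- by apply: emeasurable_funM => //; exact/measurable_funTS/measurable_EFinP.
- by move=> x _; rewrite mule_ge0 ?lee_fin.
- by rewrite lee_fin.
congr (_ * _); rewrite /= /mdensity integral_mkcondl epatch_indic.
by apply: eq_integral => x _; rewrite muleC.
Qed.

Lemma ge0_integral_mdensity (f : T -> \bar R) E :
  measurable E -> measurable_fun E f -> (forall x, 0 <= f x) ->
  \int[mdensity mu mg g0]_(x in E) f x = \int[mu]_(x in E) (f x * (g x)%:E).
Proof.
move=> mE mf f0; pose h := nnsfun_approx mE mf.
have mh n : measurable_fun E (EFin \o h n).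
  exact/measurable_funTS/measurable_EFinP.
have mgE : measurable_fun E (EFin \o g).
  exact/measurable_funTS/measurable_EFinP.
have nd_h x : E x -> nondecreasing_seq (EFin \o h^~ x).
  by move=> _ m n mn; rewrite lee_fin; exact/lefP/nd_nnsfun_approx.
have hf x : E x -> f x = limn (EFin \o h^~ x).
  by move=> Ex; apply/esym/cvg_lim => //; exact: cvg_nnsfun_approx.
have hfg x : E x -> f x * (g x)%:E = limn (fun n => (h n x)%:E * (g x)%:E).
  move=> Ex; apply/esym/cvg_lim => //.
  by apply: cvgeZr => //; exact: cvg_nnsfun_approx.
under [LHS]eq_integral => x /[!inE] /hf -> //.
under [RHS]eq_integral => x /[!inE] /hfg -> //.
rewrite monotone_convergence//; last by move=> n x _; rewrite lee_fin.
rewrite monotone_convergence//; last 3 first.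
- by move=> n; exact: emeasurable_funM (mh n) mgE.
- by move=> n x _; rewrite mule_ge0 ?lee_fin.
- by move=> x Ex m n mn; rewrite lee_wpmul2r ?lee_fin//; exact: nd_h.
by congr (limn _); apply/funext => n; exact: integral_mdensity_nnsfun.
Qed.

End mdensity_measure.

Lemma mdensity_indic (mu : {measure set T -> \bar R}) (G : set T)
  (mi : measurable_fun setT (\1_G : T -> R)) i0 A :
  measurable G -> measurable A -> mdensity mu mi i0 A = mu (A `&` G).
Proof. by move=> mG mA; rewrite /mdensity integral_indic// setIC. Qed.

Lemma integral_mdensity_indic (mu : {measure set T -> \bar R}) (D : set T)
  (mi : measurable_fun setT (\1_D : T -> R)) i0 (f : T -> \bar R) :
  measurable D -> measurable_fun setT f -> (forall x, 0 <= f x) ->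
  \int[mdensity mu mi i0]_x f x = \int[mu]_(x in D) f x.
Proof.
move=> mD mf f0.
rewrite ge0_integral_mdensity// [RHS]integral_mkcond epatch_indic.
by apply: eq_integral.
Qed.

End mdensity.

Section scaled_law.
Local Open Scope ereal_scope.
Context d (T : measurableType d) (R : realType).

Lemma ge0_integral_scaled_law (mu nu : {measure set T -> \bar R}) (f : T -> R)
  (D D' : set T) (k : R) : measurable_fun setT f -> (forall x, 0 <= f x)%R ->
  measurable D -> measurable D' -> (0 <= k)%R ->
  (forall B, measurable B ->
    mu (f @^-1` B `&` D) = k%:E * nu (f @^-1` B `&` D')) ->
  \int[mu]_(x in D) (f x)%:E = k%:E * \int[nu]_(x in D') (f x)%:E.
Proof.
move=> mf f0 mD mD' k0 lawE.
have i0 (A : set T) x : (0 <= \1_A x :> R)%R by rewrite indicE.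
have mfE : measurable_fun setT (EFin \o f) by exact/measurable_EFinP.
have fE0 x : 0 <= (f x)%:E by rewrite lee_fin.
have mi (A : set T) : measurable A -> measurable_fun setT (\1_A : T -> R).
  by move=> mA; exact: measurable_indic.
rewrite -(integral_mdensity_indic _ (mi _ mD) (i0 D))//.
rewrite -(integral_mdensity_indic _ (mi _ mD') (i0 D'))//.
(* Both sides integrate the identity against the laws of f, which live on
   [0, +oo[ and agree up to the factor k. *)
pose I := `[0%R, +oo[%classic : set R.
have mI : measurable I by exact: measurable_itv.
have fI : f @^-1` I = setT.
  by apply/seteqP; split => // x _; rewrite /I /= in_itv /= andbT f0.
have I0 : {in I, forall y : R, 0 <= y%:E}.
  by move=> y; rewrite inE /I /= in_itv /= andbT lee_fin.
have mEFin : measurable_fun I (EFin : R -> \bar R) by [].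
rewrite -fI -!(ge0_integral_pushforward mf _ mI mEFin I0).
rewrite -[k]/(NngNum k0)%:num -ge0_integral_mscale//; last first.
  by move=> y Iy; apply: I0; rewrite inE.
apply: eq_measure_integral => A mA _ /=.
have mfA := measurable_preimageT mf mA.
rewrite /pushforward mdensity_indic// lawE//.
by rewrite /mscale /= /pushforward mdensity_indic.
Qed.

End scaled_law.

Section integral_mul_factorised_law.
Local Open Scope ereal_scope.
Context d (T : measurableType d) (R : realType).
Variables (P : {finite_measure set T -> \bar R}) (v e s : T -> R) (G : set T).
Hypotheses (mv : measurable_fun setT v) (me : measurable_fun setT e)
  (ms : measurable_fun setT s) (mG : measurable G).
Hypotheses (v0 : forall x, (0 <= v x)%R) (e0 : forall x, (0 <= e x)%R)
  (s0 : forall x, (0 <= s x)%R).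
Hypothesis law_vesG : forall B1 B2 B3,
  measurable B1 -> measurable B2 -> measurable B3 ->
  P (v @^-1` B1 `&` e @^-1` B2 `&` s @^-1` B3 `&` G) =
  P (e @^-1` B2) * P (s @^-1` B3) * P (v @^-1` B1 `&` G).
Hypothesis law_es : forall B2 B3, measurable B2 -> measurable B3 ->
  P (e @^-1` B2 `&` s @^-1` B3) = P (e @^-1` B2) * P (s @^-1` B3).
Hypothesis fin_vG : \int[P]_(x in G) (v x)%:E \is a fin_num.

Let r := fine (\int[P]_(x in G) (v x)%:E).

Let rE : r%:E = \int[P]_(x in G) (v x)%:E.
Proof. exact: fineK. Qed.

Let r_ge0 : (0 <= r)%R.
Proof. by rewrite fine_ge0// integral_ge0// => x _; rewrite lee_fin. Qed.

Let vG x := (v x * \1_G x)%R.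

Let mvG : measurable_fun setT vG.
Proof. by apply: measurable_funM => //; exact: measurable_indic. Qed.

Let vG_ge0 x : (0 <= vG x)%R.
Proof. by rewrite mulr_ge0// indicE. Qed.

(* On events of (e, s) the measure [rho = v 1_G P] equals [r P] (rho_es);
   integrating out e and then s against it yields the factorisation. *)
Let rho := mdensity P mvG vG_ge0.

Let rhoE A : rho A = \int[P]_(x in A `&` G) (v x)%:E.
Proof.
rewrite integral_mkcondr epatch_indic; apply: eq_integral => x _.
by rewrite /vG EFinM.
Qed.

Let rho_es B2 B3 : measurable B2 -> measurable B3 ->
  rho (e @^-1` B2 `&` s @^-1` B3) = r%:E * P (e @^-1` B2 `&` s @^-1` B3).
Proof.
move=> mB2 mB3; have meB2 := measurable_preimageT me mB2.
have msB3 := measurable_preimageT ms mB3.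
set pe := fine (P (e @^-1` B2)); set ps := fine (P (s @^-1` B3)).
rewrite rhoE law_es// -(measure_fineK _ meB2) -(measure_fineK _ msB3) -/pe -/ps.
rewrite (@ge0_integral_scaled_law _ _ _ P P v _ G (pe * ps))//.
- by rewrite -rE -!EFinM mulrC.
- by apply: measurableI => //; exact: measurableI.
- by rewrite mulr_ge0// fine_ge0.
- move=> B mB; rewrite EFinM (measure_fineK _ meB2) (measure_fineK _ msB3).
  by rewrite -law_vesG// !setIA.
Qed.

Let rho2 := mdensity rho me e0.
Let nu := mdensity P me e0.

Let rho2_s B : measurable B -> rho2 (s @^-1` B) = r%:E * nu (s @^-1` B).
Proof.
move=> mB; have msB := measurable_preimageT ms mB.
by apply: ge0_integral_scaled_law => // B' mB'; exact: rho_es.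
Qed.

Lemma integral_mul3_factorised_law :
  \int[P]_(x in G) (v x * e x * s x)%:E =
  \int[P]_(x in G) (v x)%:E * \int[P]_x (e x * s x)%:E.
Proof.
have mEs : measurable_fun setT (EFin \o s) by exact/measurable_EFinP.
have s_rho2 : \int[rho2]_x (s x)%:E = r%:E * \int[nu]_x (s x)%:E.
  by apply: ge0_integral_scaled_law => // B mB; rewrite !setIT; exact: rho2_s.
rewrite !ge0_integral_mdensity// in s_rho2; first last.
- by move=> x; rewrite mule_ge0 ?lee_fin.
- by apply: emeasurable_funM => //; exact/measurable_EFinP.
rewrite -rE integral_mkcond epatch_indic.
transitivity (\int[P]_x ((s x)%:E * (e x)%:E * (vG x)%:E)).
  by apply: eq_integral => x _; rewrite /= /vG -!EFinM; congr EFin; ring.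
rewrite s_rho2; congr (_ * _); apply: eq_integral => x _.
by rewrite -EFinM mulrC.
Qed.

End integral_mul_factorised_law.

Section cond_mutual_indep_factor.
Local Open Scope ereal_scope.
Context (R : realType) d (T : measurableType d) (P : probability T R) (p : nat).
Variables (A : T -> R) (X : T -> p.-tuple R).
Hypothesis mAX : measurable_fun setT (AX A X).

(* Packaging (A, X) as a measurable function makes its law canonically a
   probability, hence a finite measure. *)
Let AXm : {mfun T >-> (R * p.-tuple R)%type} :=
  HB.pack (AX A X) (isMeasurableFun.Build _ _ _ _ _ mAX).

Local Notation law := (distribution P AXm).

Lemma condprob_versionE F g : condprob_version P A X F g ->
  forall C, measurable C ->
  P (F `&` AX A X @^-1` C) = \int[law]_(y in C) (g y)%:E.
Proof.
move=> [mg gE] C mC; rewrite gE// integral_pushforward_measurable//.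
exact/measurable_EFinP.
Qed.

Lemma condprob_version_integrable F g : measurable F ->
  condprob_version P A X F g -> law.-integrable setT (EFin \o g).
Proof.
move=> mF gF; have [mg _] := gF.
apply: fin_num_integrable => //; first exact/measurable_EFinP.
rewrite -(condprob_versionE gF)// fin_num_measure//.
by apply: measurableI => //; exact: measurable_preimageT.
Qed.

Lemma condprob_version_indep (U : T -> R) B g :
  measurable_fun setT U -> measurable B -> indep_AX P A X U ->
  condprob_version P A X (U @^-1` B) g ->
  ae_eq law setT (EFin \o g) (cst (P (U @^-1` B))).
Proof.
move=> mU mB indepU gB; have mUB := measurable_preimageT mU mB.
apply: integral_ae_eq => //; first exact: condprob_version_integrable gB.
move=> C _ mC; rewrite integral_cst// -(condprob_versionE gB)// indepU//.
Qed.

Lemma cond_mutual_indep_factor (U1 U2 U3 : T -> R) B1 B2 B3 C :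
  measurable_fun setT U1 -> measurable_fun setT U2 -> measurable_fun setT U3 ->
  cond_mutual_indep P A X U1 U2 U3 -> indep_AX P A X U2 -> indep_AX P A X U3 ->
  measurable B1 -> measurable B2 -> measurable B3 -> measurable C ->
  P (U1 @^-1` B1 `&` U2 @^-1` B2 `&` U3 @^-1` B3 `&` AX A X @^-1` C) =
  P (U2 @^-1` B2) * P (U3 @^-1` B3) * P (U1 @^-1` B1 `&` AX A X @^-1` C).
Proof.
move=> mU1 mU2 mU3 cmi indep2 indep3 mB1 mB2 mB3 mC.
have [g1 [g2 [g3 [g1B1 [g2B2 [g3B3 g123]]]]]] := cmi B1 B2 B3 mB1 mB2 mB3.
have ae2 := condprob_version_indep mU2 mB2 indep2 g2B2.
have ae3 := condprob_version_indep mU3 mB3 indep3 g3B3.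
have [mg1 _] := g1B1; have [mg123 _] := g123.
have mUB2 := measurable_preimageT mU2 mB2.
have mUB3 := measurable_preimageT mU3 mB3.
rewrite (condprob_versionE g123)// (condprob_versionE g1B1)//.
rewrite -(measure_fineK _ mUB2) -(measure_fineK _ mUB3).
rewrite -EFinM -integralZl//; last first.
  apply: (integrableS measurableT mC (@subsetT _ C)).
  exact: condprob_version_integrable (measurable_preimageT mU1 mB1) g1B1.
apply: ae_eq_integral => //.
- exact/measurable_EFinP/measurable_funTS.
- by apply/measurable_funTS/emeasurable_funM => //; exact/measurable_EFinP.
apply: (ae_eq_subset (@subsetT _ C)); apply: filterS2 ae2 ae3 => y g2E g3E _.
have /= := g2E I; have /= := g3E I.
rewrite -(measure_fineK _ mUB2) -(measure_fineK _ mUB3).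
by move=> [->] [->]; congr EFin; ring.
Qed.

End cond_mutual_indep_factor.

Section model.
Local Open Scope ereal_scope.
Context (R : realType) d (T : measurableType d) (P : probability T R)
  (J p : nat) (W : T -> J.-tuple R) (A : T -> R) (X : T -> p.-tuple R)
  (V E : T -> J.-tuple R) (S : T -> R).
Hypothesis model : model_assumptions P W A X V E S.
Variable j : 'I_J.

Local Notation Wj := (fun t => tnth (W t) j).
Local Notation Vj := (fun t => tnth (V t) j).
Local Notation Ej := (fun t => tnth (E t) j).

Lemma cond_mean_ext_W (a : R) : cond_mean_ext P A Vj a \is a fin_num ->
  cond_mean_ext P A Wj a = cond_mean_ext P A Vj a * \int[P]_t (Ej t * S t)%:E.
Proof.
have [[mW mA mX mV] [[mE mS] [_ [nonneg [S_gt0 hj]]]]] := model.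
have [Wj_VES cmi indepE indepS] := hj j.
have mVj : measurable_fun setT Vj by move/measurable_fun_tnthP : mV => /(_ j).
have mEj : measurable_fun setT Ej by move/measurable_fun_tnthP : mE => /(_ j).
have mAX : measurable_fun setT (AX A X) by exact: measurable_fun_pair.
have mCa : measurable ([set a] `*` [set: p.-tuple R]) by exact: measurableX.
have Ga : AX A X @^-1` ([set a] `*` [set: p.-tuple R]) = A @^-1` [set a].
  by apply/seteqP; split => t /=; rewrite /AX /= => -[].
have mGa := measurable_preimageT mAX mCa.
rewrite /cond_mean_ext -Ga Wj_VES// => finVa.
apply: integral_mul3_factorised_law => //.
- by move=> t; have [] := nonneg t j.
- by move=> t; have [_ _ /ltW] := nonneg t j.
- by move=> t; exact/ltW.
- move=> B1 B2 B3 mB1 mB2 mB3.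
  exact: cond_mutual_indep_factor mVj mEj mS cmi indepE indepS mB1 mB2 mB3 mCa.
- move=> B2 B3 mB2 mB3.
  have := cond_mutual_indep_factor mAX mVj mEj mS cmi indepE indepS
    measurableT mB2 mB3 measurableT.
  by rewrite !preimage_setT !setTI setIT probability_setT mule1.
Qed.

Lemma cond_mean_W_scaled : well_defined P A Wj Vj ->
  exists2 k : R, k != 0%R & forall a, a = 0%R \/ a = 1%R ->
    cond_mean P A Wj a = (cond_mean P A Vj a * k)%R.
Proof.
have [_ [_ [_ [nonneg [S_gt0 _]]]]] := model.
move=> wd; set K := \int[P]_t (Ej t * S t)%:E.
have W_VK a : a = 0%R \/ a = 1%R ->
    cond_mean_ext P A Wj a = cond_mean_ext P A Vj a * K.
  move=> a01; have [_ /andP[Va_gt0 Va_ltoo] _] := wd a a01.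
  by apply: cond_mean_ext_W; rewrite ge0_fin_numE// ltW.
have [_ /andP[V1_gt0 V1_ltoo] /andP[W1_gt0 W1_ltoo]] := wd 1%R (or_intror erefl).
have K_ge0 : 0 <= K.
  apply: integral_ge0 => t _; have [_ _ E_gt0] := nonneg t j.
  by rewrite lee_fin mulr_ge0// ltW.
have finK : K \is a fin_num.
  rewrite ge0_fin_numE// ltNge leye_eq; apply/negP => /eqP Koo.
  by move: W1_ltoo; rewrite W_VK; [rewrite Koo gt0_muley// ltxx|right].
exists (fine K) => [|a a01].
  apply/negP => /eqP K0; move: W1_gt0.
  by rewrite W_VK; [rewrite -(fineK finK) K0 mule0 ltxx|right].
have [_ /andP[Va_gt0 Va_ltoo] _] := wd a a01.
have finVa : cond_mean_ext P A Vj a \is a fin_num by rewrite ge0_fin_numE// ltW.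
by rewrite /cond_mean W_VK// fineM// mulrAC.
Qed.

Lemma Psi1_W : well_defined P A Wj Vj ->
  Psi1 P A Vj = ln (cond_mean P A Wj 1 / cond_mean P A Wj 0).
Proof.
move=> /cond_mean_W_scaled[k k_neq0 WE].
rewrite /Psi1 !WE; [|by left|by right]; congr ln.
by rewrite [in RHS]invfM [in RHS]mulrACA mulfV// mulr1.
Qed.

End model.

Section observed_law.
Local Open Scope ereal_scope.
Context (R : realType) (J p : nat) (j : 'I_J) (a : R).

Let Z := ((J.-tuple R * R) * p.-tuple R)%type.
Let Da := (fun z : Z => z.1.2) @^-1` [set a].

Let mDa : measurable Da.
Proof.
apply: measurable_preimageT => //.
exact: (measurableT_comp measurable_snd measurable_fst).
Qed.

Let mWj : measurable_fun setT (fun z : Z => (tnth z.1.1 j)%:E).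
Proof.
apply/measurable_EFinP/(measurableT_comp (measurable_tnth j)).
exact: measurableT_comp measurable_fst measurable_fst.
Qed.

Let measurable_observed d (T : measurableType d)
  (W : T -> J.-tuple R) (A : T -> R) (X : T -> p.-tuple R) :
  measurable_fun setT W -> measurable_fun setT A -> measurable_fun setT X ->
  measurable_fun setT (fun t => (W t, A t, X t)).
Proof.
by move=> mW mA mX; apply: measurable_fun_pair => //; exact: measurable_fun_pair.
Qed.

Let cond_mean_law d (T : measurableType d) (P : probability T R)
  (W : T -> J.-tuple R) (A : T -> R) (X : T -> p.-tuple R) :
  measurable_fun setT W -> measurable_fun setT A -> measurable_fun setT X ->
  let law := pushforward P (fun t => (W t, A t, X t)) in
  cond_mean P A (fun t => tnth (W t) j) a =
  (fine (\int[law]_(z in Da) (tnth z.1.1 j)%:E) / fine (law Da))%R.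
Proof.
move=> mW mA mX law.
by rewrite /law integral_pushforward_measurable//; exact: measurable_observed.
Qed.

Lemma cond_mean_same_observed_law d1 (T1 : measurableType d1)
  (P1 : probability T1 R) (W1 : T1 -> J.-tuple R) (A1 : T1 -> R)
  (X1 : T1 -> p.-tuple R) d2 (T2 : measurableType d2) (P2 : probability T2 R)
  (W2 : T2 -> J.-tuple R) (A2 : T2 -> R) (X2 : T2 -> p.-tuple R) :
  measurable_fun setT W1 -> measurable_fun setT A1 -> measurable_fun setT X1 ->
  measurable_fun setT W2 -> measurable_fun setT A2 -> measurable_fun setT X2 ->
  same_observed_law P1 W1 A1 X1 P2 W2 A2 X2 ->
  cond_mean P1 A1 (fun t => tnth (W1 t) j) a =
  cond_mean P2 A2 (fun t => tnth (W2 t) j) a.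
Proof.
move=> mW1 mA1 mX1 mW2 mA2 mX2 same.
rewrite (cond_mean_law P1 mW1 mA1 mX1) (cond_mean_law P2 mW2 mA2 mX2).
congr (fine _ / fine _)%R; last exact: same.
apply: eq_measure_integral;
  [exact: measurable_observed|exact: measurable_observed|] => ? ? B mB _.
exact: same.
Qed.

End observed_law.

Theorem mainTheorem1 (R : realType) (J p : nat)
  (d1 : measure_display) (T1 : measurableType d1) (P1 : probability T1 R)
  (W1 : T1 -> J.-tuple R) (A1 : T1 -> R) (X1 : T1 -> p.-tuple R)
  (V1 E1 : T1 -> J.-tuple R) (S1 : T1 -> R)
  (d2 : measure_display) (T2 : measurableType d2) (P2 : probability T2 R)
  (W2 : T2 -> J.-tuple R) (A2 : T2 -> R) (X2 : T2 -> p.-tuple R)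
  (V2 E2 : T2 -> J.-tuple R) (S2 : T2 -> R) :
  model_assumptions P1 W1 A1 X1 V1 E1 S1 ->
  model_assumptions P2 W2 A2 X2 V2 E2 S2 ->
  same_observed_law P1 W1 A1 X1 P2 W2 A2 X2 ->
  forall j : 'I_J,
    well_defined P1 A1 (fun t => tnth (W1 t) j) (fun t => tnth (V1 t) j) ->
    well_defined P2 A2 (fun t => tnth (W2 t) j) (fun t => tnth (V2 t) j) ->
    Psi1 P1 A1 (fun t => tnth (V1 t) j) = Psi1 P2 A2 (fun t => tnth (V2 t) j).
Proof.
move=> model1 model2 same j wd1 wd2.
have [[mW1 mA1 mX1 _] _] := model1; have [[mW2 mA2 mX2 _] _] := model2.
have W12 a := cond_mean_same_observed_law j a mW1 mA1 mX1 mW2 mA2 mX2 same.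
by rewrite (Psi1_W model1 wd1) (Psi1_W model2 wd2) !W12.
Qed.
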